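(* Let $\mathcal G=(V,E)$ be a finite DAG in which every vertex has either $0$ or exactly $k$ parents, for a fixed $k\ge1$, and which has at least one vertex of depth one. Let $X$ be a BN with full support on $\mathcal G$ with states $\mathcal A$ whose non-trivial CPDs all coincide: for each $v\in V_p$ the parents are ordered as $(p_1(v),\dots,p_k(v))$ and there is a single kernel $Q:\mathcal A^k\times\mathcal A\to[0,1]$ with $\mathbb P(X_v=c\mid X_{p_1(v)}=a_1,\dots,X_{p_k(v)}=a_k)=Q(a_1,\dots,a_k;c)$ for all $v\in V_p$. Let $f:\mathcal A\to\mathcal B$ be a surjection and $U_v=f(X_v)$. Then (D3) holds if and only if for all $w,\tilde w\in\mathcal A^k$ with $f(w)=f(\tilde w)$ (coordinatewise) and all $b\in\mathcal B$, $\sum_{c\in f^{-1}(b)}Q(w;c)=\sum_{c\in f^{-1}(b)}Q(\tilde w;c)$.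
   Context: $pa(v)$ parents; $V_s$ parentless vertices, $V_p=V\setminus V_s$; $depth(v)$ maximal number of edges of a directed path from a vertex of $V_s$ to $v$. A BN on $\mathcal G$ with states $\mathcal A$ (finite) is specified by distributions $\alpha_v$ on $\mathcal A$ for $v\in V_s$ and CPDs $P_v(\cdot\mid a_{pa(v)})$ for $v\in V_p$; law $\prod_{v\in V_s}\alpha_v(x_v)\prod_{v\in V_p}P_v(x_v\mid x_{pa(v)})$; full support: all $x\in\mathcal A^V$ have positive probability. $\mathbb P_{\tilde\alpha}$ is the law with the same CPDs and initial distribution $\tilde\alpha$. (D3): for every initial distribution $\tilde\alpha$, $(U_v)$ under $\mathbb P_{\tilde\alpha}$ factorises over $\mathcal G$ (law of form $\prod_vq_v(u_v\mid u_{pa(v)})$), and for every $v\in V_p$, $b_v$, $b_{pa(v)}$ the value $\mathbb P_{\tilde\alpha}(U_v=b_v\mid U_{pa(v)}=b_{pa(v)})$ is the same for all $\tilde\alpha$ with $\mathbb P_{\tilde\alpha}(U_{pa(v)}=b_{pa(v)})>0$. *)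

From mathcomp Require Import all_boot all_order all_algebra.
Set Implicit Arguments. Unset Strict Implicit. Unset Printing Implicit Defensive.
Import Order.TTheory GRing.Theory Num.Theory.
Local Open Scope ring_scope.

(* A DAG on the finite vertex set V in which every vertex has either no parent
   (par v = None) or exactly k parents, given in order as p : 'I_k -> V
   (par v = Some p, with p injective). *)

Definition edge (V : finType) (k : nat) (par : V -> option {ffun 'I_k -> V}) : rel V :=
  fun u v => if par v is Some p then u \in codom p else false.

Definition is_dag (V : finType) (k : nat) (par : V -> option {ffun 'I_k -> V}) : Prop :=
  forall u v, edge par u v -> ~~ connect (edge par) v u.

Definition depth_path (V : finType) (k : nat) (par : V -> option {ffun 'I_k -> V})
  (v : V) (n : nat) : Prop :=
  exists (x : V) (s : seq V),
    par x = None /\ path (edge par) x s /\ last x s = v /\ size s = n.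

Definition has_depth (V : finType) (k : nat) (par : V -> option {ffun 'I_k -> V})
  (v : V) (n : nat) : Prop :=
  depth_path par v n /\ forall m, depth_path par v m -> (m <= n)%N.

Definition is_init_distr (R : realFieldType) (V A : finType) (k : nat)
  (par : V -> option {ffun 'I_k -> V}) (alpha : V -> A -> R) : Prop :=
  forall v, par v = None -> (forall a, 0 <= alpha v a) /\ \sum_(a : A) alpha v a = 1.

Definition is_kernel (R : realFieldType) (A : finType) (k : nat)
  (Q : {ffun 'I_k -> A} -> A -> R) : Prop :=
  forall w, (forall c, 0 <= Q w c) /\ \sum_(c : A) Q w c = 1.

Definition joint (R : realFieldType) (V A : finType) (k : nat)
  (par : V -> option {ffun 'I_k -> V}) (alpha : V -> A -> R)
  (Q : {ffun 'I_k -> A} -> A -> R) (x : {ffun V -> A}) : R :=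
  \prod_(v : V) match par v with
                | None => alpha v (x v)
                | Some p => Q [ffun i => x (p i)] (x v)
                end.

Definition prob (R : realFieldType) (V A : finType) (k : nat)
  (par : V -> option {ffun 'I_k -> V}) (alpha : V -> A -> R)
  (Q : {ffun 'I_k -> A} -> A -> R) (E : pred {ffun V -> A}) : R :=
  \sum_(x | E x) joint par alpha Q x.

Definition factorises_U (R : realFieldType) (V A B : finType) (k : nat)
  (par : V -> option {ffun 'I_k -> V}) (Q : {ffun 'I_k -> A} -> A -> R)
  (f : A -> B) (alpha : V -> A -> R) : Prop :=
  exists (r : V -> B -> R) (q : V -> {ffun 'I_k -> B} -> B -> R),
    (forall v, par v = None -> (forall b, 0 <= r v b) /\ \sum_(b : B) r v b = 1) /\
    (forall v p, par v = Some p -> forall w,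
        (forall b, 0 <= q v w b) /\ \sum_(b : B) q v w b = 1) /\
    (forall u : {ffun V -> B},
        prob par alpha Q (fun x => [forall v, f (x v) == u v]) =
        \prod_(v : V) match par v with
                      | None => r v (u v)
                      | Some p => q v [ffun i => u (p i)] (u v)
                      end).

Definition Epa (V A B : finType) (k : nat) (f : A -> B) (p : {ffun 'I_k -> V})
  (bs : {ffun 'I_k -> B}) : pred {ffun V -> A} :=
  fun x => [forall i, f (x (p i)) == bs i].

Definition D3 (R : realFieldType) (V A B : finType) (k : nat)
  (par : V -> option {ffun 'I_k -> V}) (Q : {ffun 'I_k -> A} -> A -> R)
  (f : A -> B) : Prop :=
  (forall alpha', is_init_distr par alpha' -> factorises_U par Q f alpha') /\
  (forall v p, par v = Some p ->
     forall (b : B) (bs : {ffun 'I_k -> B}) (alpha1 alpha2 : V -> A -> R),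
       is_init_distr par alpha1 -> is_init_distr par alpha2 ->
       0 < prob par alpha1 Q (Epa f p bs) ->
       0 < prob par alpha2 Q (Epa f p bs) ->
       prob par alpha1 Q (fun x => Epa f p bs x && (f (x v) == b))
         / prob par alpha1 Q (Epa f p bs)
       = prob par alpha2 Q (fun x => Epa f p bs x && (f (x v) == b))
         / prob par alpha2 Q (Epa f p bs)).

From mathcomp Require Import all_boot all_order all_algebra.
Set Implicit Arguments. Unset Strict Implicit. Unset Printing Implicit Defensive.
Import Order.TTheory GRing.Theory Num.Theory.
Local Open Scope ring_scope.

(* The joint law is a product of local factors, one per vertex.  For a set S of
   vertices closed under children, summing such a product over the coordinates in
   S, children before parents, replaces the factor of each s in S by its sum over
   the admissible values of x_s, as long as that sum does not depend on the other
   coordinates.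

   If Q is lumpable, the mass Q(w; f^-1(b)) depends only on f(w).  Summing over all
   of V then gives the factorisation of the law of U, and summing over the
   descendants of v gives P(U_v = b, U_pa(v) = bs) = Q(w; f^-1(b)) P(U_pa(v) = bs)
   for any w over bs, whatever the initial law.  Conversely, all parents of a vertex
   v of depth one are roots; pinning them by point masses at w, resp. w', yields
   initial laws under which P(U_v = b | U_pa(v) = f(w)) equals Q(w; f^-1(b)), resp.
   Q(w'; f^-1(b)), so (D3) forces lumpability. *)

Section Update.
Variables (V A : finType).
Implicit Types (x : {ffun V -> A}) (s y : V) (c : A).

Definition upd x s c : {ffun V -> A} := [ffun y => if y == s then c else x y].

Lemma upd_same x s c : upd x s c s = c.
Proof. by rewrite ffunE eqxx. Qed.

Lemma upd_other x s c y : y != s -> upd x s c y = x y.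
Proof. by rewrite ffunE => /negPf->. Qed.

Lemma upd_upd x s a c : upd (upd x s a) s c = upd x s c.
Proof. by apply/ffunP=> y; rewrite !ffunE; case: eqP. Qed.

Lemma upd_id x s : upd x s (x s) = x.
Proof. by apply/ffunP=> y; rewrite !ffunE; case: eqP => [->|]. Qed.

Lemma sum_upd (R : nmodType) (F : {ffun V -> A} -> R) s a0 :
  \sum_(x : {ffun V -> A}) F x = \sum_(x : {ffun V -> A} | x s == a0) \sum_c F (upd x s c).
Proof.
rewrite (partition_big (fun x => upd x s a0) (fun x => x s == a0)) => [|x _]; last first.
  by rewrite upd_same.
apply: eq_bigr => y /eqP ys; rewrite (partition_big (fun x => x s) predT) //=.
apply: eq_bigr => c _; apply: big_pred1 => x /=.
apply/andP/eqP => [[/eqP <- /eqP <-]|->]; first by rewrite upd_upd upd_id.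
by rewrite upd_same upd_upd -ys upd_id.
Qed.

Lemma sum_out_coord (R : comPzSemiRingType) (E : pred {ffun V -> A})
    (G g : {ffun V -> A} -> R) (K : pred A) s a0 h :
  (forall x c, E (upd x s c) = E x) -> (forall x c, G (upd x s c) = G x) ->
  (forall x, E x -> \sum_(c | K c) g (upd x s c) = h) ->
  \sum_(x | E x && K (x s)) G x * g x = h * \sum_(x | E x && (x s == a0)) G x.
Proof.
move=> HE HG Hg; rewrite big_mkcond (sum_upd _ s a0) mulr_sumr.
rewrite [RHS](eq_bigl (fun x => (x s == a0) && E x)) => [|x]; last by rewrite andbC.
rewrite big_mkcondr /=; apply: eq_bigr => x _.
under eq_bigr => c _ do rewrite upd_same HE HG.
case Ex: (E x); last by rewrite big1.
rewrite -(Hg x Ex) mulr_suml [RHS]big_mkcond; apply: eq_bigr => c _.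
by case: (K c) => /=; rewrite ?mul0r // mulrC.
Qed.

End Update.

Lemma forall_inD1 (T : finType) (S : {set T}) s (P : pred T) : s \in S ->
  [forall y in S, P y] = P s && [forall y in S :\ s, P y].
Proof.
move=> Hs; apply/forall_inP/andP => [H|[H1 /forall_inP H2] y Hy].
  by split; [exact: H | apply/forall_inP=> y /setD1P [_ /H]].
by case: (eqVneq y s) => [->//|ne]; apply: H2; rewrite !inE ne.
Qed.

Lemma sum_fibers (R : nmodType) (A B : finType) (f : A -> B) (F : A -> R) :
  \sum_b \sum_(a | f a == b) F a = \sum_a F a.
Proof. by rewrite [RHS](partition_big f predT). Qed.

Lemma pick_inj (I T : finType) (p : I -> T) i :
  injective p -> [pick j | p j == p i] = Some i.
Proof. by move=> hinj; case: pickP => [j /eqP /hinj -> | /(_ i)]; rewrite ?eqxx. Qed.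

Section Dag.
Variables (V : finType) (k : nat) (par : V -> option {ffun 'I_k -> V}).
Hypothesis hdag : is_dag par.

Lemma dag_edge_neq y w : edge par y w -> y != w.
Proof. by move=> e; apply: contraTneq (hdag e) => ->; rewrite connect0. Qed.

Lemma dag_exists_source (S : {set V}) : S != set0 ->
  exists2 s, s \in S & forall y, edge par y s -> y \notin S.
Proof.
case/set0Pn => s0 Hs0.
case: (arg_minnP (fun s => #|[set z | connect (edge par) z s]|) Hs0) => s Hs Hmin.
exists s => // y e; apply/negP => Hy; have := Hmin y Hy; apply/negP; rewrite -ltnNge.
apply: proper_card; apply/properP; split.
  by apply/subsetP=> z; rewrite !inE => Hz; exact: connect_trans Hz (connect1 e).
by exists s; rewrite !inE ?connect0 //; exact: hdag e.
Qed.

Lemma dag_root_ancestor u : (0 < k)%N ->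
  exists2 z, par z = None & connect (edge par) z u.
Proof.
move=> kpos; have /dag_exists_source [s] : [set z | connect (edge par) z u] != set0.
  by apply/set0Pn; exists u; rewrite inE connect0.
rewrite inE => Hs Hsrc; exists s => //; case Hp: (par s) => [p|] //.
have e : edge par (p (Ordinal kpos)) s by rewrite /edge Hp codom_f.
by have := Hsrc _ e; rewrite inE (connect_trans (connect1 e) Hs).
Qed.

Lemma depth1_parents_roots v : (0 < k)%N -> has_depth par v 1 ->
  exists2 p, par v = Some p & forall i, par (p i) = None.
Proof.
move=> kpos [[x [s [hx [hpath [hlast hsize]]]]] hmax].
case Hv: (par v) => [p|]; last first.
  case: s hpath hlast hsize => [|y [|]] //= /andP [e _] hy _.
  by move: e; rewrite hy /edge Hv.
exists p => // i; case Hpi: (par (p i)) => [p'|] //.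
have [z hz /connectP [s' pth lst]] := dag_root_ancestor (p i) kpos.
have ev : edge par (p i) v by rewrite /edge Hv codom_f.
have /hmax : depth_path par v (size s').+1.
  exists z, (rcons s' v); rewrite rcons_path pth -lst ev.
  by rewrite last_rcons size_rcons.
by case: s' pth lst => // _ /= lst; move: hz; rewrite -lst Hpi.
Qed.

Variables (R : comPzSemiRingType) (A : finType) (g : V -> {ffun V -> A} -> R).
Hypothesis g_local : forall w s x c,
  s != w -> ~~ edge par s w -> g w (upd x s c) = g w x.

Lemma sum_prod_eliminate (S : {set V}) (E : pred {ffun V -> A}) (G : {ffun V -> A} -> R)
    (K : V -> pred A) (h : V -> R) (y0 : {ffun V -> A}) :
  (forall s x c, s \in S -> E (upd x s c) = E x) ->
  (forall s x c, s \in S -> G (upd x s c) = G x) ->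
  (forall s x, s \in S -> E x -> (forall y, y \in S -> edge par y s -> K y (x y)) ->
     \sum_(c | K s c) g s (upd x s c) = h s) ->
  \sum_(x | E x && [forall y in S, K y (x y)]) G x * \prod_(w in S) g w x
  = (\prod_(w in S) h w) * \sum_(x | E x && [forall y in S, x y == y0 y]) G x.
Proof.
move: {2}#|S| (erefl #|S|) => n; elim: n S E G => [|n IH] S E G HS HE HG Hh.
  have -> : S = set0 by apply/eqP; rewrite -cards_eq0 HS.
  rewrite big_set0 mul1r; apply: eq_big => [x|x _]; last by rewrite big_set0 mulr1.
  by congr andb; apply/forall_inP/forall_inP => _ y; rewrite in_set0.
(* Sum out [S :\ s] before a source [s] of [S]: then [g s] is constant in the
   coordinates summed first, and [s] has no constrained parent when its turn comes. *)
have /dag_exists_source [s Hs Hsrc] : S != set0 by rewrite -card_gt0 HS.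
have HS' : #|S :\ s| = n by move: HS; rewrite (cardsD1 s) Hs => -[].
have S'S s' : s' \in S :\ s -> s' != s /\ s' \in S by case/setD1P.
transitivity (\sum_(x | (E x && K s (x s)) && [forall y in S :\ s, K y (x y)])
                 (G x * g s x) * \prod_(w in S :\ s) g w x).
  apply: eq_big => [x|x _]; first by rewrite (forall_inD1 _ Hs) andbA.
  by rewrite (big_setD1 s Hs) mulrA.
rewrite IH // => [|s' x c /S'S [ne Hs'] | s' x c /S'S [ne Hs'] | s' x /S'S [ne Hs']].
- rewrite (big_setD1 s Hs) -mulrA [RHS]mulrCA; congr (_ * _).
  rewrite [LHS](eq_bigl (fun x => (E x && [forall y in S :\ s, x y == y0 y]) && K s (x s)));
    last by move=> x; rewrite andbAC.
  rewrite (sum_out_coord (h := h s) (y0 s)) => [|x c|x c|x /andP [Ex _]].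
  + congr (_ * _); apply: eq_bigl => x.
    by rewrite (forall_inD1 _ Hs) [(x s == _) && _]andbC andbA.
  + congr andb; first exact: HE.
    by apply: eq_forallb_in => y /S'S [ne _]; rewrite upd_other.
  + exact: HG.
  + by apply: Hh => // y yS /Hsrc; rewrite yS.
- by rewrite HE // upd_other // eq_sym.
- by rewrite HG // g_local //; apply: contraL Hs'; exact: Hsrc.
- case/andP => Ex Ks Hpar; apply: Hh => // y yS e.
  by case: (eqVneq y s) => [->//|ne_ys]; apply: Hpar; rewrite ?in_setD1 ?ne_ys.
Qed.

End Dag.

Section BayesNet.
Variables (R : realFieldType) (V A B : finType) (k : nat).
Variables (par : V -> option {ffun 'I_k -> V}) (Q : {ffun 'I_k -> A} -> A -> R) (f : A -> B).
Hypotheses (hdag : is_dag par) (hQ : is_kernel Q).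

Definition factor (alpha : V -> A -> R) w (x : {ffun V -> A}) : R :=
  match par w with
  | None => alpha w (x w)
  | Some p => Q [ffun i => x (p i)] (x w)
  end.

Lemma jointE alpha x : joint par alpha Q x = \prod_w factor alpha w x.
Proof. by []. Qed.

Lemma factor_upd_other alpha w s x c :
  s != w -> ~~ edge par s w -> factor alpha w (upd x s c) = factor alpha w x.
Proof.
move=> ne nE; rewrite /factor.
have -> : upd x s c w = x w by rewrite upd_other // eq_sym.
case Hp: (par w) => [p|] //; congr Q; apply/ffunP => i; rewrite !ffunE ifN //.
by apply: contraNneq nE => <-; rewrite /edge Hp codom_f.
Qed.

Lemma factor_upd_same alpha w x c : factor alpha w (upd x w c) =
  match par w with None => alpha w c | Some p => Q [ffun i => x (p i)] c end.
Proof.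
rewrite /factor upd_same; case Hp: (par w) => [p|] //.
congr Q; apply/ffunP => i; rewrite !ffunE ifN //.
by apply: (dag_edge_neq hdag); rewrite /edge Hp codom_f.
Qed.

Lemma factor_ge0 alpha w x : is_init_distr par alpha -> 0 <= factor alpha w x.
Proof.
move=> hal; rewrite /factor; case Hp: (par w) => [p|]; first exact: (hQ _).1.
exact: (hal w Hp).1.
Qed.

Lemma sum_factor_upd alpha w x :
  is_init_distr par alpha -> \sum_c factor alpha w (upd x w c) = 1.
Proof.
move=> hal; under eq_bigr => c _ do rewrite factor_upd_same.
by case Hp: (par w) => [p|]; [exact: (hQ _).2 | exact: (hal w Hp).2].
Qed.

Lemma factor_gt0 alpha w x : is_init_distr par alpha ->
  (forall x, 0 < joint par alpha Q x) -> 0 < factor alpha w x.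
Proof.
move=> hal hfull; rewrite lt0r factor_ge0 // andbT.
by apply: contraTneq (hfull x) => fw0; rewrite jointE (bigD1 w) //= fw0 mul0r ltxx.
Qed.

Lemma prob_fiber alpha v p (S : {set V}) (E : pred {ffun V -> A}) b c0 :
  is_init_distr par alpha -> par v = Some p -> v \in S ->
  (forall y w, edge par y w -> y \in S -> w \in S) ->
  (forall s x c, s \in S -> E (upd x s c) = E x) ->
  (forall x, E x -> \sum_(c | f c == b) Q [ffun i => x (p i)] c = c0) ->
  prob par alpha Q (fun x => E x && (f (x v) == b)) = c0 * prob par alpha Q E.
Proof.
move=> hal hp vS Sclosed HE Hc0.
have [y0 _|X0] := pickP (@predT {ffun V -> A}); last first.
  by rewrite /prob !big_pred0 ?mulr0 // => x; have := X0 x.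
pose G x := \prod_(w | w \notin S) factor alpha w x.
have HG s x c : s \in S -> G (upd x s c) = G x.
  move=> sS; apply: eq_bigr => w wS; apply: factor_upd_other.
    by apply: contraNneq wS => <-.
  by apply: contra wS => e; exact: Sclosed e sS.
have prob_elim K h : (forall s x, s \in S -> E x ->
      \sum_(c | K s c) factor alpha s (upd x s c) = h s) ->
    prob par alpha Q (fun x => E x && [forall y in S, K y (x y)])
    = \prod_(w in S) h w * \sum_(x | E x && [forall y in S, x y == y0 y]) G x.
  move=> Hh; rewrite /prob
    -(sum_prod_eliminate hdag (@factor_upd_other alpha) (K := K) (h := h) y0 HE HG)
    => [|s x sS Ex _]; last exact: Hh.
  by apply: eq_bigr => x _; rewrite jointE (bigID (mem S)) mulrC.
have -> : prob par alpha Q E = \sum_(x | E x && [forall y in S, x y == y0 y]) G x.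
  have := prob_elim (fun _ _ => true) (fun _ => 1) (fun s x _ _ => sum_factor_upd _ _ hal).
  rewrite big1_eq mul1r => <-; rewrite /prob; apply: eq_bigl => x.
  suff -> : [forall y in S, true] by rewrite andbT.
  by apply/forall_inP.
have Hh s x : s \in S -> E x -> \sum_(c | (s != v) || (f c == b))
    factor alpha s (upd x s c) = if s == v then c0 else 1.
  move=> _ Ex; case: (eqVneq s v) => [->|ne]; last by rewrite /= sum_factor_upd.
  by under eq_bigr => c _ do rewrite factor_upd_same hp; exact: Hc0.
have := prob_elim _ _ Hh.
rewrite (big_setD1 v vS) eqxx big1 /= ?mulr1 => [<-|y /setD1P [/negPf -> //]].
rewrite /prob; apply: eq_bigl => x; rewrite (forall_inD1 _ vS) eqxx /=.
suff -> : [forall y in S :\ v, (y != v) || (f (x y) == b)] by rewrite andbT.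
by apply/forall_inP => y /setD1P [->].
Qed.

End BayesNet.

Definition lumpable (R : realFieldType) (A B : finType) (k : nat)
    (Q : {ffun 'I_k -> A} -> A -> R) (f : A -> B) :=
  forall w w' : {ffun 'I_k -> A}, (forall i, f (w i) = f (w' i)) ->
    forall b, \sum_(c | f c == b) Q w c = \sum_(c | f c == b) Q w' c.

Section Lumpable.
Variables (R : realFieldType) (V A B : finType) (k : nat).
Variables (par : V -> option {ffun 'I_k -> V}) (Q : {ffun 'I_k -> A} -> A -> R) (f : A -> B).
Hypotheses (hdag : is_dag par) (hQ : is_kernel Q) (hlump : lumpable Q f).
Variables (sec : B -> A) (secK : cancel sec f).

Definition lumped_kernel (bs : {ffun 'I_k -> B}) b :=
  \sum_(c | f c == b) Q [ffun i => sec (bs i)] c.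

Lemma lumpableE (w : {ffun 'I_k -> A}) (bs : {ffun 'I_k -> B}) b :
  (forall i, f (w i) = bs i) -> \sum_(c | f c == b) Q w c = lumped_kernel bs b.
Proof. by move=> hw; apply: hlump => i; rewrite ffunE secK. Qed.

Lemma lumped_kernel_ge0 bs b : 0 <= lumped_kernel bs b.
Proof. by apply: sumr_ge0 => c _; exact: (hQ _).1. Qed.

Lemma sum_lumped_kernel bs : \sum_b lumped_kernel bs b = 1.
Proof. by rewrite sum_fibers (hQ _).2. Qed.

Lemma lumpable_factorises alpha : is_init_distr par alpha -> factorises_U par Q f alpha.
Proof.
move=> hal; exists (fun v b => \sum_(a | f a == b) alpha v a).
exists (fun _ bs b => lumped_kernel bs b).
split; [|split].
- move=> v hv; split => [b|]; last by rewrite sum_fibers (hal v hv).2.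
  by apply: sumr_ge0 => a _; exact: (hal v hv).1.
- by move=> v p _ bs; split; [exact: lumped_kernel_ge0 | exact: sum_lumped_kernel].
move=> u; pose h w := match par w with
  | None => \sum_(a | f a == u w) alpha w a
  | Some p => lumped_kernel [ffun i => u (p i)] (u w) end.
have Hh s (x : {ffun V -> A}) : s \in [set: V] -> predT x ->
    (forall y, y \in [set: V] -> edge par y s -> f (x y) == u y) ->
    \sum_(c | f c == u s) factor par Q alpha s (upd x s c) = h s.
  move=> _ _ Hpar; under eq_bigr => c _ do rewrite factor_upd_same //.
  rewrite /h; case Hp: (par s) => [p|] //; apply: lumpableE => i.
  by rewrite !ffunE; apply/eqP; apply: Hpar; rewrite ?in_setT // /edge Hp codom_f.
pose y0 : {ffun V -> A} := [ffun y => sec (u y)].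
have sum_y0 :
    \sum_(x : {ffun V -> A} | predT x && [forall y in [set: V], x y == y0 y]) 1 = 1 :> R.
  apply: (big_pred1 y0) => x /=; apply/forall_inP/eqP => [H|-> //].
  by apply/ffunP => y; apply/eqP/H; rewrite in_setT.
have := sum_prod_eliminate hdag (@factor_upd_other _ _ _ _ _ Q alpha) y0
  (E := predT) (G := fun _ => 1) (fun _ _ _ _ => erefl) (fun _ _ _ _ => erefl) Hh.
rewrite sum_y0 mulr1 /prob => E; apply: etrans (etrans _ E) _.
- apply: eq_big => [x|x _]; first by apply: eq_forallb => y; rewrite in_setT.
  by rewrite mul1r jointE; apply: eq_bigl => w; rewrite in_setT.
- by apply: eq_bigl => w; rewrite in_setT.
Qed.

Lemma lumpable_cond_prob alpha v p bs b : is_init_distr par alpha -> par v = Some p ->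
  prob par alpha Q (fun x => Epa f p bs x && (f (x v) == b))
  = lumped_kernel bs b * prob par alpha Q (Epa f p bs).
Proof.
move=> hal hp; apply: (prob_fiber hdag hQ (p := p) (E := Epa f p bs)
  (S := [set w | connect (edge par) v w])) => //.
- by rewrite inE connect0.
- by move=> y w e; rewrite !inE => /connect_trans; apply; exact: connect1.
- move=> s x c; rewrite inE => vs; apply: eq_forallb => i; rewrite upd_other //.
  by apply: contraTneq vs => <-; apply: hdag; rewrite /edge hp codom_f.
- by move=> x Ex; apply: lumpableE => i; rewrite ffunE; exact/eqP/(forallP Ex i).
Qed.

Lemma lumpable_D3 : D3 par Q f.
Proof.
split=> [alpha|v p hp b bs al1 al2 h1 h2 pos1 pos2]; first exact: lumpable_factorises.
by rewrite !lumpable_cond_prob // !mulfK // lt0r_neq0.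
Qed.

End Lumpable.

Section Pinned.
Variables (R : realFieldType) (V A B : finType) (k : nat).
Variables (par : V -> option {ffun 'I_k -> V}) (Q : {ffun 'I_k -> A} -> A -> R) (f : A -> B).
Hypotheses (hdag : is_dag par) (hQ : is_kernel Q).
Variables (alpha : V -> A -> R) (v : V) (p : {ffun 'I_k -> V}).
Hypotheses (hal : is_init_distr par alpha) (hp : par v = Some p) (hinj : injective p).
Hypothesis hroots : forall i, par (p i) = None.
Implicit Types (w : {ffun 'I_k -> A}) (x : {ffun V -> A}).

Definition pin_init (w : {ffun 'I_k -> A}) y a : R :=
  if [pick i | p i == y] is Some i then (a == w i)%:R else alpha y a.

Lemma pin_init_distr w : is_init_distr par (pin_init w).
Proof.
move=> y hy; rewrite /pin_init; case: pickP => [i _|_]; last exact: hal.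
split=> [a|]; first exact: ler0n.
by rewrite (bigD1 (w i)) //= eqxx big1 ?addr0 // => a /negPf ->.
Qed.

Lemma joint_pin_eq0 w x :
  ~~ [forall i, x (p i) == w i] -> joint par (pin_init w) Q x = 0.
Proof.
case/forallPn => i ne; rewrite jointE (bigD1 (p i)) //=.
by rewrite /factor hroots /pin_init pick_inj // (negPf ne) mul0r.
Qed.

Lemma pinned_cond_prob w b :
  prob par (pin_init w) Q (fun x => Epa f p [ffun i => f (w i)] x && (f (x v) == b))
  = (\sum_(c | f c == b) Q w c) * prob par (pin_init w) Q (Epa f p [ffun i => f (w i)]).
Proof.
pose W x := [forall i, x (p i) == w i].
have probW (E : pred {ffun V -> A}) :
    prob par (pin_init w) Q E = prob par (pin_init w) Q (fun x => W x && E x).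
  rewrite /prob (bigID W) /= [X in _ + X]big1 ?addr0 => [|x /andP [_]]; last first.
    exact: joint_pin_eq0.
  by apply: eq_bigl => x; rewrite andbC.
have W_Epa x : W x -> Epa f p [ffun i => f (w i)] x.
  by move=> /forallP Wx; apply/forallP => i; rewrite ffunE (eqP (Wx i)).
rewrite probW [in RHS]probW /prob.
rewrite (eq_bigl (fun x => W x && (f (x v) == b))) => [|x]; last first.
  by case Wx: (W x); rewrite //= W_Epa.
rewrite [in RHS](eq_bigl W) => [|x]; last by case Wx: (W x); rewrite //= W_Epa.
apply: (prob_fiber hdag hQ (S := [set y | y \notin codom p]) (E := W) (p := p)).
- exact: pin_init_distr.
- exact: hp.
- by rewrite inE; apply/codomP => -[i e]; move: hp; rewrite e hroots.
- move=> y u e _; rewrite inE; apply/codomP => -[j ej].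
  by move: e; rewrite /edge ej hroots.
- move=> s x c; rewrite inE => sp; apply: eq_forallb => i; rewrite upd_other //.
  by apply: contraNneq sp => <-; exact: codom_f.
- move=> x Wx; suff -> : [ffun i => x (p i)] = w by [].
  by apply/ffunP => i; rewrite ffunE; apply/eqP/(forallP Wx i).
Qed.

Lemma pinned_prob_gt0 w : (0 < k)%N -> (forall x, 0 < joint par alpha Q x) ->
  0 < prob par (pin_init w) Q (Epa f p [ffun i => f (w i)]).
Proof.
move=> kpos hfull.
pose x0 : {ffun V -> A} :=
  [ffun y => if [pick i | p i == y] is Some i then w i else w (Ordinal kpos)].
have x0p i : x0 (p i) = w i by rewrite ffunE pick_inj.
rewrite /prob (bigD1 x0) /=; last by apply/forallP => i; rewrite x0p ffunE.
apply: ltr_wpDr.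
  apply: sumr_ge0 => x _; apply: prodr_ge0 => y _.
  exact/factor_ge0/pin_init_distr.
rewrite jointE; apply: prodr_gt0 => y _.
case: (pickP (fun i => p i == y)) => [i /eqP <- | ny].
  by rewrite /factor hroots /pin_init pick_inj // x0p eqxx ltr01.
have -> : factor par Q (pin_init w) y x0 = factor par Q alpha y x0.
  by rewrite /factor /pin_init; case: (par y) => //; case: pickP => [j|//]; rewrite ny.
exact: factor_gt0.
Qed.

End Pinned.

Lemma D3_lumpable (R : realFieldType) (V A B : finType) (k : nat)
    (par : V -> option {ffun 'I_k -> V}) (alpha : V -> A -> R)
    (Q : {ffun 'I_k -> A} -> A -> R) (f : A -> B) :
  (0 < k)%N -> is_dag par -> is_kernel Q ->
  (forall v p, par v = Some p -> injective p) -> (exists v, has_depth par v 1) ->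
  is_init_distr par alpha -> (forall x, 0 < joint par alpha Q x) ->
  D3 par Q f -> lumpable Q f.
Proof.
move=> kpos hdag hQ hinj [v hdep] hal hfull [_ hD] w w' hww' b.
have [p hp hroots] := depth1_parents_roots hdag kpos hdep.
set bs := [ffun i => f (w i)].
have bs' : [ffun i => f (w' i)] = bs by apply/ffunP => i; rewrite !ffunE hww'.
have ratio (w1 : {ffun 'I_k -> A}) : [ffun i => f (w1 i)] = bs ->
    prob par (pin_init alpha p w1) Q (fun x => Epa f p bs x && (f (x v) == b))
      / prob par (pin_init alpha p w1) Q (Epa f p bs) = \sum_(c | f c == b) Q w1 c.
  move=> <-; rewrite (pinned_cond_prob f hdag hQ hal hp (hinj _ _ hp) hroots) mulfK //.
  exact/lt0r_neq0/(pinned_prob_gt0 f hQ hal (hinj _ _ hp) hroots).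
rewrite -ratio // -(ratio w') //; apply: hD => //; try exact: pin_init_distr.
- exact: (pinned_prob_gt0 f hQ hal (hinj _ _ hp) hroots).
- by rewrite -bs'; exact: (pinned_prob_gt0 f hQ hal (hinj _ _ hp) hroots).
Qed.

Theorem mainTheorem14 (R : realFieldType) (V A B : finType) (k : nat)
  (par : V -> option {ffun 'I_k -> V}) (alpha : V -> A -> R)
  (Q : {ffun 'I_k -> A} -> A -> R) (f : A -> B) :
  (0 < k)%N ->
  is_dag par ->
  (forall v p, par v = Some p -> injective p) ->
  (exists v, has_depth par v 1) ->
  is_init_distr par alpha ->
  is_kernel Q ->
  (forall x : {ffun V -> A}, 0 < joint par alpha Q x) ->
  (forall b : B, exists a : A, f a = b) ->
  (D3 par Q f <->
   forall w w' : {ffun 'I_k -> A}, (forall i, f (w i) = f (w' i)) ->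
     forall b : B, \sum_(c | f c == b) Q w c = \sum_(c | f c == b) Q w' c).
Proof.
move=> kpos hdag hinj hdepth hal hQ hfull hsurj.
have fiber_ex b : exists a, f a == b by case: (hsurj b) => a <-; exists a.
have secK : cancel (fun b => xchoose (fiber_ex b)) f.
  by move=> b; exact/eqP/(xchooseP (fiber_ex b)).
split; first exact: (D3_lumpable kpos hdag hQ hinj hdepth hal hfull).
by move=> hlump; exact: lumpable_D3 secK.
Qed.
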